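(* Let $d\ge1$ and let $\mathcal T_d=(t_{i-j})_{0\le i,j\le d-1}$ be an invertible complex Toeplitz matrix. Choose $t_+,t_-\in\mathbb C\setminus\{0\}$ with $t_++t_-=t_0$ and arbitrary $\gamma,\delta\in\mathbb C$, and set $S_{-1}=X^{2d+1}+1$ and $$S_0=T_{\gamma,\delta}=-t_--t_{-1}X-\dots-t_{-d+1}X^{d-1}+\gamma X^d+\delta X^{d+1}+t_{d-1}X^{d+2}+\dots+t_1X^{2d}+t_+X^{2d+1}.$$ Let $(S_j)$ be the symmetric subresultants of $S_{-1},S_0$ (degree $2d+1$). Then $S_d(0)\neq0$, and if $U=\sum_{i=0}^{d-1}u_iX^i$, $V=\sum_{i=0}^{d-1}v_iX^i\in\mathbb C[X]$ are any polynomials of degree at most $d-1$ with $X^{d-1}S_d=U\,(X^{2d+1}+1)+V\,T_{\gamma,\delta}$, then $\mathcal T_d^T(v_0,\dots,v_{d-1})^T=(0,\dots,0,-S_d(0))^T$; equivalently, the first column of $\mathcal T_d^{-1}$ is $-\frac{1}{S_d(0)}(v_{d-1},v_{d-2},\dots,v_0)^T$.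
   Context: Symmetric subresultants: for $A=\sum_{i=0}^n a_iX^i$, $B=\sum_{i=0}^n b_iX^i$ with $\deg A=n\ge1$ ($B$ of formal degree $n$), put $a_i=b_i=0$ for $i<0$ or $i>n$; for $1\le j\le n$, $0\le\ell\le n-j$, $\mathrm{Sylv}_{j,\ell}$ is the $2j\times2j$ matrix whose $r$-th row ($1\le r\le j$) is $(a_{1-r},\dots,a_{j-1-r},\ a_{j-r+\ell},\ a_{n+1-r},\dots,a_{n+j-r})$ and whose $(j+r)$-th row is the same with $b$ in place of $a$; $S_{-1}=A$, $S_0=B$, $S_j=\sum_{\ell=0}^{n-j}\det(\mathrm{Sylv}_{j,\ell})X^\ell$ for $1\le j\le n$. Here $n=2d+1$. (Such $U,V$ exist by the Bezout-type relation for symmetric subresultants.) *)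

From HB Require Import structures.
From mathcomp Require Import all_boot all_order all_algebra.
From mathcomp Require Import complex.
From mathcomp Require Import reals.
Set Implicit Arguments. Unset Strict Implicit. Unset Printing Implicit Defensive.
Import Order.TTheory GRing.Theory Num.Theory.
Local Open Scope ring_scope.

Section SymSubres.
Variable C : nzRingType.

Definition coefz (p : {poly C}) (k : int) : C :=
  match k with Posz m => p`_m | Negz _ => 0 end.

(* Sylv_{j,l}(A,B) for formal degree n, rows/columns 0-indexed:
   row r0 < j (from A, r0 = r-1):
     column c < j-1  : a_{c - r0}
     column c = j-1  : a_{j-1-r0+l}
     column c >= j   : a_{n - r0 + (c - j)}
   rows j + r0 : same with B. *)
Definition sylv_sym (A B : {poly C}) (n j l : nat) : 'M[C]_(j + j) :=
  \matrix_(r < j + j, c < j + j)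
    let p := if (r < j)%N then A else B in
    let r0 : nat := (if (r < j)%N then (r : nat) else (r : nat) - j)%N in
    coefz p (if (c.+1 < j)%N then c%:Z - r0%:Z
             else if (c < j)%N then j%:Z - 1 - r0%:Z + l%:Z
             else n%:Z - r0%:Z + (c%:Z - j%:Z)).

Definition symsubres (A B : {poly C}) (n j : nat) : {poly C} :=
  \sum_(l < (n - j).+1) \det (sylv_sym A B n j l) *: 'X^l.

End SymSubres.

Definition toeplitz (C : nzRingType) (d : nat) (t : int -> C) : 'M[C]_d :=
  \matrix_(i < d, j < d) t (i%:Z - j%:Z).

Definition Tgd (C : nzRingType) (d : nat) (t : int -> C) (tp tm gamma delta : C)
  : {poly C} :=
  \poly_(k < (d + d).+2)
    (if k == 0%N then - tm
     else if (k < d)%N then - t (- k%:Z)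
     else if k == d then gamma
     else if k == d.+1 then delta
     else if (k <= d + d)%N then t ((d + d).+1%:Z - k%:Z)
     else tp).

From HB Require Import structures.
From mathcomp Require Import all_boot all_order all_algebra.
From mathcomp Require Import complex.
From mathcomp Require Import reals.
From mathcomp Require Import zify.
Set Implicit Arguments. Unset Strict Implicit. Unset Printing Implicit Defensive.
Import Order.TTheory GRing.Theory Num.Theory.
Local Open Scope ring_scope.

(* At l = 0 the Sylvester matrix of X^(2d+1) + 1 and T has the block form
   [[1, 1], [L, H]], where L and H are the Toeplitz blocks of the low and the
   high coefficients of T; hence S_d(0) = det (H - L), and t_+ + t_- = t_0 makes
   H - L exactly the Toeplitz matrix T_d.  For k < d, subtracting the
   coefficients of X^k and X^(2d+1+k) in X^(d-1) S_d = U (X^(2d+1) + 1) + V T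
   cancels the U-terms and leaves row k of T_d^T v on the right, while on the
   left only -S_d(0) survives, at k = d-1, because deg S_d <= d+1.  Since T_d
   is persymmetric, reversing this system yields the first column of T_d^-1. *)

Section SymsubresCoefficients.
Variable R : nzRingType.
Implicit Types (p q A B : {poly R}) (n j s : nat).

Lemma coefz_lt0 p (z : int) : z < 0 -> coefz p z = 0.
Proof. by case: z. Qed.

Lemma coefM_coefz p q d (m : nat) : (size p <= d)%N ->
  (p * q)`_m = \sum_(k < d) p`_k * coefz q (m%:Z - k%:Z).
Proof.
move=> sp; have {1}-> : p = \sum_(k < d) p`_k *: 'X^k.
  rewrite -poly_def; apply/polyP => k; rewrite coef_poly; case: ltnP => // dk.
  by rewrite nth_default // (leq_trans sp).
rewrite mulr_suml coef_sum; apply: eq_bigr => k _.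
rewrite -scalerAl coefZ coefXnM; case: ltnP => km.
  by rewrite coefz_lt0 // ltrBlDr add0r ltz_nat.
by rewrite subzn.
Qed.

Definition coef_shift_mx j p s : 'M[R]_j :=
  \matrix_(r < j, c < j) coefz p (s%:Z + c%:Z - r%:Z).

Lemma sylv_sym0E A B n j :
  sylv_sym A B n j 0 = block_mx (coef_shift_mx j A 0) (coef_shift_mx j A n)
                                (coef_shift_mx j B 0) (coef_shift_mx j B n).
Proof.
rewrite -[LHS]submxK; congr block_mx; apply/matrixP => r c; rewrite !mxE /=;
  have := ltn_ord r; have := ltn_ord c => cj rj.
- rewrite (ltn_ord r); case: ifP => h; rewrite ?(ltn_ord c); congr coefz; lia.
- rewrite (ltn_ord r); have -> : ((j + c).+1 < j)%N = false by lia.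
  have -> : (j + c < j)%N = false by lia.
  congr coefz; lia.
- have -> : (j + r < j)%N = false by lia.
  case: ifP => h; rewrite ?(ltn_ord c); congr coefz; lia.
- have -> : (j + r < j)%N = false by lia.
  have -> : ((j + c).+1 < j)%N = false by lia.
  have -> : (j + c < j)%N = false by lia.
  congr coefz; lia.
Qed.

Lemma coefz_Xn_add1 n (z : int) :
  coefz ('X^n + 1 : {poly R}) z = ((z == n%:Z) + (z == 0))%:R.
Proof. by case: z => m //=; rewrite coefD coefXn coef1 natrD. Qed.

Lemma coef_shift_mx_Xn_add1 j n s : (j <= n)%N -> s = 0%N \/ s = n ->
  coef_shift_mx j ('X^n + 1) s = 1%:M.
Proof.
move=> jn hs; apply/matrixP => r c; rewrite !mxE coefz_Xn_add1.
have := ltn_ord r; have := ltn_ord c => cj rj.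
case: (eqVneq r c) => [<-|/eqP rc]; last have {}rc : (r : nat) <> c by move/val_inj.
all: case: hs => ->; do 2 case: eqP => ?; first [by [] | lia].
Qed.

Lemma symsubres_coef0 A B n j : (symsubres A B n j)`_0 = \det (sylv_sym A B n j 0).
Proof.
rewrite /symsubres coef_sum big_ord_recl coefZ coefXn mulr1 big1 ?addr0 // => l _.
by rewrite coefZ coefXn mulr0.
Qed.

Lemma size_symsubres A B n j : (size (symsubres A B n j) <= (n - j).+1)%N.
Proof. by rewrite /symsubres -(poly_def _ (fun l => \det (sylv_sym A B n j l))) size_poly. Qed.

End SymsubresCoefficients.

Lemma det_block1 (R : comNzRingType) m (L H : 'M[R]_m) :
  \det (block_mx 1%:M 1%:M L H) = \det (H - L).
Proof.
have -> : block_mx 1%:M 1%:M L H = block_mx 1%:M 0 L 1%:M *m block_mx 1%:M 1%:M 0 (H - L).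
  by rewrite mulmx_block !mul1mx !mul0mx !mulmx1 !addr0 addrC subrK.
by rewrite det_mulmx det_lblock det_ublock !det1 !mul1r.
Qed.

Section BezoutCoefficients.
Variables (R : nzRingType) (d n : nat) (S U V T : {poly R}).
Hypotheses (dn : (d <= n)%N) (sizeS : (size S <= (n - d).+1)%N) (sizeU : (size U <= d)%N).
Hypothesis bezout : 'X^(d.-1) * S = U * ('X^n + 1) + V * T.

Lemma coef_bezout_sub (k : nat) : (k < d)%N ->
  (V * T)`_(n + k) - (V * T)`_k = - ((k == d.-1)%:R * S`_0).
Proof.
move=> kd; have -> : V * T = 'X^(d.-1) * S - U * ('X^n + 1) by rewrite bezout addrC addKr.
rewrite !coefB !coefXnM mulrDr mulr1 !coefD !coefMXn.
rewrite (nth_default _ (_ : size S <= n + k - d.-1)%N); last lia.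
rewrite (nth_default _ (_ : size U <= n + k)%N); last lia.
have -> : (n + k < d.-1)%N = false by lia.
have -> : (n + k < n)%N = false by lia.
have -> : (k < n)%N by lia.
rewrite addKn !addr0 !add0r; case: (ltnP k d.-1) => hk.
  have -> : (k == d.-1) = false by lia.
  by rewrite mul0r oppr0 sub0r opprK addNr.
have -> : k = d.-1 by lia.
by rewrite subnn eqxx mul1r opprB addKr.
Qed.

End BezoutCoefficients.

Lemma toeplitz_mul_rowsub_rev (R : nzRingType) d (t : int -> R) m (x : 'M[R]_(d, m)) :
  toeplitz d t *m rowsub (@rev_ord d) x = rowsub (@rev_ord d) ((toeplitz d t)^T *m x).
Proof.
apply/matrixP => i k; rewrite !mxE (reindex_inj rev_ord_inj); apply: eq_bigr => j _.
rewrite !mxE rev_ordK; congr (t _ * _); rewrite /=; have := ltn_ord i; have := ltn_ord j; lia.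
Qed.

Section TgdCoefficients.
Variables (R : comNzRingType) (d : nat) (t : int -> R) (tp tm gamma delta : R).
Hypothesis htp : tp + tm = t 0.
Local Notation T := (Tgd d t tp tm gamma delta).
Local Notation n := (d + d).+1.

Lemma coefz_Tgd_sub (i k : nat) : (i < d)%N -> (k < d)%N ->
  coefz T (n%:Z + k%:Z - i%:Z) - coefz T (k%:Z - i%:Z) = t (i%:Z - k%:Z).
Proof.
move=> id kd; have -> : n%:Z + k%:Z - i%:Z = (n + k - i)%N by lia.
rewrite /Tgd /= coef_poly; case: (ltngtP k i) => [ki|ik|<-].
- rewrite coefz_lt0 ?subr0; last lia.
  by repeat (case: ifP => ?; try (exfalso; lia)); congr t; lia.
- have -> : (k%:Z - i%:Z) = (k - i)%N by lia.
  rewrite /= coef_poly.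
  by repeat (case: ifP => ?; try (exfalso; lia)); rewrite sub0r opprK; congr t; lia.
- by rewrite subrr /= coef_poly; repeat (case: ifP => ?; try (exfalso; lia)); rewrite opprK -htp.
Qed.

Lemma coef_shift_mx_Tgd : coef_shift_mx d T n - coef_shift_mx d T 0 = toeplitz d t.
Proof. by apply/matrixP => r c; rewrite !mxE add0r coefz_Tgd_sub. Qed.

Lemma symsubres_Tgd_coef0 : (symsubres ('X^n + 1) T n d)`_0 = \det (toeplitz d t).
Proof.
have dn : (d <= n)%N by lia.
rewrite symsubres_coef0 sylv_sym0E !(coef_shift_mx_Xn_add1 _ dn) ?det_block1 ?coef_shift_mx_Tgd //.
all: by [left | right].
Qed.

Lemma tr_toeplitz_mul_col (V : {poly R}) (k : 'I_d) : (size V <= d)%N ->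
  ((toeplitz d t)^T *m \col_(i < d) V`_i) k 0 = (V * T)`_(n + k) - (V * T)`_k.
Proof.
move=> sV; rewrite !(coefM_coefz _ _ sV) -sumrB mxE; apply: eq_bigr => j _.
by rewrite !mxE -mulrBr PoszD coefz_Tgd_sub // mulrC.
Qed.

End TgdCoefficients.

Unset Implicit Arguments.
Local Open Scope complex_scope.

Theorem mainTheorem11 (R : realType) (d : nat) (t : int -> R[i])
  (tp tm gamma delta : R[i]) :
  (0 < d)%N ->
  toeplitz d t \in unitmx ->
  tp != 0 -> tm != 0 -> tp + tm = t 0 ->
  let n := (d + d).+1 in
  let Sm1 := 'X^n + 1 : {poly R[i]} in
  let T := Tgd d t tp tm gamma delta in
  let Sd := symsubres Sm1 T n d in
  Sd.[0] != 0 /\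
  (forall U V : {poly R[i]}, (size U <= d)%N -> (size V <= d)%N ->
     'X^(d.-1) * Sd = U * Sm1 + V * T ->
     (toeplitz d t)^T *m (\col_(i < d) V`_i)
       = \col_(i < d) (if i == d.-1 :> nat then - Sd.[0] else 0)
     /\ invmx (toeplitz d t) *m \col_(i < d) (if i == 0%N :> nat then 1 else 0)
       = - (Sd.[0])^-1 *: \col_(i < d) V`_(d.-1 - i)).
Proof.
move=> d_gt0 unitT _ _ htp n Sm1 T Sd.
have Sd0E : Sd.[0] = \det (toeplitz d t) by rewrite horner_coef0 symsubres_Tgd_coef0.
have Sd0_neq0 : Sd.[0] != 0 by rewrite Sd0E -unitfE -unitmxE.
split=> // U V sU sV bezout.
have tr_system : (toeplitz d t)^T *m (\col_(i < d) V`_i)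
    = \col_(i < d) (if i == d.-1 :> nat then - Sd.[0] else 0).
  apply/matrixP => k z; rewrite ord1 (tr_toeplitz_mul_col gamma delta htp _ sV).
  rewrite (coef_bezout_sub _ (size_symsubres _ _ _ _) sU bezout) ?mxE ?horner_coef0 //; last lia.
  by case: eqP => _; rewrite ?mul1r ?mul0r ?oppr0.
split=> //.
have rev_colV : \col_(i < d) V`_(d.-1 - i) = rowsub (@rev_ord d) (\col_i V`_i).
  by apply/matrixP => i j; rewrite !mxE /=; congr (V`_ _); lia.
have rev_rhs : rowsub (@rev_ord d) (\col_(i < d) (if i == d.-1 :> nat then - Sd.[0] else 0))
    = - Sd.[0] *: \col_(i < d) (if i == 0%N :> nat then 1 else 0).
  apply/matrixP => i j; rewrite !mxE /=; have := ltn_ord i.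
  by case: eqP => hi; case: eqP => hi0; rewrite ?mulr1 ?mulr0 //; lia.
have toeplitz_rev_colV : toeplitz d t *m (- Sd.[0]^-1 *: \col_(i < d) V`_(d.-1 - i))
    = \col_(i < d) (if i == 0%N :> nat then 1 else 0).
  rewrite -scalemxAr rev_colV toeplitz_mul_rowsub_rev tr_system rev_rhs.
  by rewrite scalerA mulrNN mulVf // scale1r.
by rewrite -toeplitz_rev_colV mulKmx.
Qed.
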